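(* Consider the species $T_{100},T_{010},T_{001}$ with concentrations $x,y,z$, complexes $C_1=2T_{100}$, $C_2=2T_{010}$, $C_3=2T_{001}$, $C_4=T_{100}+T_{010}$, $C_5=T_{100}+T_{001}$, $C_6=T_{010}+T_{001}$, and the network $\mathcal N$ with the 18 reactions $C_1\to C_4,\ C_1\to C_5,\ C_2\to C_4,\ C_2\to C_6,\ C_3\to C_5,\ C_3\to C_6,\ C_4\to C_1,\ C_4\to C_2,\ C_4\to C_5,\ C_4\to C_6,\ C_5\to C_1,\ C_5\to C_3,\ C_5\to C_4,\ C_5\to C_6,\ C_6\to C_2,\ C_6\to C_3,\ C_6\to C_4,\ C_6\to C_5$, with rate constants $k(i,j)=i$ for each reaction $C_i\to C_j$. Then the mass-action system of $\mathcal N$ coincides with the mass-action system of the network $\mathcal N'$ with reactions $C_1\rightleftarrows C_6$, $C_2\rightleftarrows C_5$, $C_3\rightleftarrows C_4$ and rate constants $k(1,6)=1$, $k(6,1)=6$, $k(2,5)=2$, $k(5,2)=5$, $k(3,4)=3$, $k(4,3)=4$; $\mathcal N'$ is weakly reversible with deficiency one; and this mass-action system has exactly one positive equilibrium in each positive stoichiometric compatibility class $\{(x,y,z)\in\mathbb R^3_{>0}: x+y+z=c\}$, $c>0$. *)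

From Stdlib Require Import Reals.
From HB Require Import structures.
From mathcomp Require Import all_boot all_order all_algebra.

Set Implicit Arguments.
Unset Strict Implicit.
Unset Printing Implicit Defensive.

(** Species T100, T010, T001 (concentrations x, y, z) are indexed 0, 1, 2.
    A complex is its triple of stoichiometric coefficients. *)
Definition complex := (nat * nat * nat)%type.

Definition coef (c : complex) (j : nat) : nat :=
  match j with 0 => c.1.1 | 1 => c.1.2 | 2 => c.2 | _ => 0 end.

Definition C (i : nat) : complex :=
  match i with
  | 1 => (2, 0, 0) | 2 => (0, 2, 0) | 3 => (0, 0, 2)
  | 4 => (1, 1, 0) | 5 => (1, 0, 1) | 6 => (0, 1, 1)
  | _ => (0, 0, 0) end.

Definition network := seq (complex * complex).

Definition rated_network := seq (complex * complex * R).

Definition mon (c : complex) (x y z : R) : R :=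
  Rmult (Rmult (pow x c.1.1) (pow y c.1.2)) (pow z c.2).

Definition ma_rhs (K : rated_network) (x y z : R) (j : nat) : R :=
  List.fold_right
    (fun r acc => Rplus (Rmult (Rmult r.2 (mon r.1.1 x y z))
                             (Rminus (INR (coef r.1.2 j)) (INR (coef r.1.1 j)))) acc)
    R0 K.

Definition rrxn (i j : nat) : complex * complex * R := (C i, C j, INR i).
Definition rxn (i j : nat) : complex * complex := (C i, C j).

Definition N_rated : rated_network :=
  [:: rrxn 1 4; rrxn 1 5; rrxn 2 4; rrxn 2 6; rrxn 3 5; rrxn 3 6;
      rrxn 4 1; rrxn 4 2; rrxn 4 5; rrxn 4 6; rrxn 5 1; rrxn 5 3;
      rrxn 5 4; rrxn 5 6; rrxn 6 2; rrxn 6 3; rrxn 6 4; rrxn 6 5].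

Definition N' : network :=
  [:: rxn 1 6; rxn 6 1; rxn 2 5; rxn 5 2; rxn 3 4; rxn 4 3].

Definition N'_rated : rated_network :=
  [:: rrxn 1 6; rrxn 6 1; rrxn 2 5; rrxn 5 2; rrxn 3 4; rrxn 4 3].

Definition complexes (N : network) : seq complex :=
  undup (flatten [seq [:: r.1; r.2] | r <- N]).

Definition weakly_reversible (N : network) : Prop :=
  forall r, r \in N ->
    exists p : seq complex,
      path (fun u v : complex => (u, v) \in N) r.2 p /\ last r.2 p = r.1.

Definition ulink (N : network) : rel (seq_sub (complexes N)) :=
  fun u v => ((val u, val v) \in N) || ((val v, val u) \in N).

Definition n_linkage (N : network) : nat :=
  n_comp (@ulink N) (fun _ => true).

Definition stoich_mx (N : network) : 'M[rat]_(size N, 3) :=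
  \matrix_(i < size N, j < 3)
     (((coef (nth (C 0, C 0) N i).2 j)%:R - (coef (nth (C 0, C 0) N i).1 j)%:R)%R).

Definition deficiency (N : network) : int :=
  ((size (complexes N))%:Z - (n_linkage N)%:Z - (\rank (stoich_mx N))%:Z)%R.

From Pilot Require Import Defs.
From Stdlib Require Import Reals Lra Psatz.
From HB Require Import structures.
From mathcomp Require Import all_boot all_order all_algebra.

(** - Both mass-action systems have quadratic vector fields; that they agree is
      a polynomial identity, checked componentwise.
    - N' is reversible, hence weakly reversible.
    - N' has 6 complexes, 3 linkage classes and a stoichiometric subspace of
      dimension 2: the rank is computed from a factorization of the
      stoichiometric matrix through a 2 x 3 matrix with a right inverse.
    - Equilibria.  Every complex of N' has total degree 2, so the vector field
      is homogeneous of degree 2 and preserves x + y + z.  Hence the positive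
      equilibria form rays, and each ray meets each class x + y + z = c exactly
      once; it suffices to show that there is a unique positive equilibrium
      with z = 1.  In the ratios u = x/z, v = y/z, the equilibrium equations
      are equivalent to u (4v - 5) = 3 - 2v^2 and u^2 + 5u = 2v^2 + 6v;
      positivity forces sqrt(3/2) < v < 5/4, and eliminating u leaves the
      quartic q(v) = 14v^4 + 28v^3 - 114v^2 + 45v + 33, which has exactly one
      root in that window (intermediate value theorem for existence; q is
      decreasing on [1.2247, 1.24] and negative on [1.24, 1.25] for uniqueness). *)

Local Open Scope R_scope.

Lemma reversible_weakly_reversible (N : network) :
  {in N, forall r, (r.2, r.1) \in N} -> weakly_reversible N.
Proof. by move=> rev r /rev back; exists [:: r.1]; rewrite /= back. Qed.

Lemma N'_reversible : {in N', forall r, (r.2, r.1) \in N'}.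
Proof. by apply/allP. Qed.

Lemma size_complexes_N' : size (complexes N') = 6%N.
Proof. by vm_compute. Qed.

(** The enumeration of the complexes of N', as elements of their subtype;
    it makes the linkage classes computable. *)
Lemma enum_complexes_N' :
  Finite.enum (seq_sub (complexes N')) =
  [:: @SeqSub _ (complexes N') (Defs.C 6) (erefl true);
      @SeqSub _ (complexes N') (Defs.C 1) (erefl true);
      @SeqSub _ (complexes N') (Defs.C 5) (erefl true);
      @SeqSub _ (complexes N') (Defs.C 2) (erefl true);
      @SeqSub _ (complexes N') (Defs.C 4) (erefl true);
      @SeqSub _ (complexes N') (Defs.C 3) (erefl true)].
Proof. by apply: (inj_map val_inj); rewrite unlock val_seq_sub_enum. Qed.

(** The linkage classes are {C1, C6}, {C2, C5} and {C3, C4}. *)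
Lemma n_linkage_N' : n_linkage N' = 3%N.
Proof.
rewrite /n_linkage /n_comp_mem /roots card.unlock /enum_mem enum_complexes_N'.
rewrite /fingraph.root /pick /connect /rgraph /= card.unlock /enum_mem.
by rewrite enum_complexes_N'; vm_compute.
Qed.

Section StoichiometricRank.
Local Open Scope ring_scope.

Lemma mxrank_factor (F : fieldType) (m n k : nat) (A : 'M[F]_(m, n))
    (B : 'M_(m, k)) (M : 'M_(k, n)) (S : 'M_(k, m)) :
  A = B *m M -> S *m A = M -> \rank A = \rank M.
Proof.
move=> defA defM; apply/eqP; rewrite eqn_leq.
by rewrite {1}defA mxrankM_maxr -{1}defM mxrankM_maxr.
Qed.

Definition mx_of_rows (m n : nat) (rows : seq (seq rat)) : 'M[rat]_(m, n) :=
  \matrix_(i < m, j < n) nth 0 (nth [::] rows i) j.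

(** The reaction vectors of C1 -> C6 and C2 -> C5, which span the
    stoichiometric subspace, ... *)
Definition basis_mx : 'M[rat]_(2, 3) :=
  mx_of_rows 2 3 [:: [:: -2; 1; 1]; [:: 1; -2; 1]].

(** ... the coordinates of the six reaction vectors in that basis, ... *)
Definition coord_mx : 'M[rat]_(6, 2) :=
  mx_of_rows 6 2 [:: [:: 1; 0]; [:: -1; 0]; [:: 0; 1]; [:: 0; -1];
                     [:: -1; -1]; [:: 1; 1]].

(** ... the selection of the rows of C1 -> C6 and C2 -> C5, ... *)
Definition select_mx : 'M[rat]_(2, 6) :=
  mx_of_rows 2 6 [:: [:: 1; 0; 0; 0; 0; 0]; [:: 0; 0; 1; 0; 0; 0]].

(** ... and a right inverse of basis_mx. *)
Definition basis_rinv : 'M[rat]_(3, 2) :=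
  mx_of_rows 3 2 [:: [:: -2/3; -1/3]; [:: -1/3; -2/3]; [:: 0; 0]].

Ltac entrywise :=
  apply/matrixP; case=> [[|[|[|[|[|[|?]]]]]] ?] //; case=> [[|[|[|?]]] ?] //;
  rewrite !mxE !big_ord_recr big_ord0 /= !mxE; by apply/eqP; vm_compute.

Lemma stoich_mx_N'_factor : stoich_mx N' = coord_mx *m basis_mx.
Proof. entrywise. Qed.

Lemma select_stoich_mx_N' : select_mx *m stoich_mx N' = basis_mx.
Proof. entrywise. Qed.

Lemma rank_basis_mx : \rank basis_mx = 2%N.
Proof. by apply/eqP/row_freeP; exists basis_rinv; entrywise. Qed.

Lemma rank_stoich_mx_N' : \rank (stoich_mx N') = 2%N.
Proof.
rewrite -[RHS]rank_basis_mx.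
exact: mxrank_factor stoich_mx_N'_factor select_stoich_mx_N'.
Qed.

End StoichiometricRank.

Lemma deficiency_N' : deficiency N' = Posz 1.
Proof.
by rewrite /deficiency size_complexes_N' n_linkage_N' rank_stoich_mx_N'.
Qed.

Definition degree (c : complex) : nat := (c.1.1 + c.1.2 + c.2)%nat.

Definition source_degree (d : nat) (K : rated_network) : Prop :=
  List.Forall (fun r => degree r.1.1 = d) K.

Definition degree_preserving (K : rated_network) : Prop :=
  List.Forall (fun r => degree r.1.2 = degree r.1.1) K.

Definition equilibrium (K : rated_network) (x y z : R) : Prop :=
  forall j : nat, (j < 3)%nat -> ma_rhs K x y z j = 0.

Lemma mon_scale (c : complex) (t x y z : R) :
  mon c (t * x) (t * y) (t * z) = t ^ degree c * mon c x y z.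
Proof. by rewrite /mon /degree !Rpow_mult_distr !pow_add; ring. Qed.

Lemma ma_rhs_scale (K : rated_network) (d : nat) (t x y z : R) (j : nat) :
  source_degree d K ->
  ma_rhs K (t * x) (t * y) (t * z) j = t ^ d * ma_rhs K x y z j.
Proof.
elim: K => [|r K IH] /=; first by move=> _; ring.
move=> /List.Forall_cons_iff [deg_r deg_K].
by rewrite IH // mon_scale deg_r; ring.
Qed.

Lemma ma_rhs_sum (K : rated_network) (x y z : R) :
  degree_preserving K ->
  ma_rhs K x y z 0 + ma_rhs K x y z 1 + ma_rhs K x y z 2 = 0.
Proof.
elim: K => [|r K IH] /=; first by move=> _; ring.
move=> /List.Forall_cons_iff [deg_r deg_K].
set k := r.2 * mon r.1.1 x y z.
transitivity (k * (INR (degree r.1.2) - INR (degree r.1.1)) +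
  (ma_rhs K x y z 0 + ma_rhs K x y z 1 + ma_rhs K x y z 2)).
  by rewrite /degree !plus_INR; ring.
by rewrite deg_r IH //; ring.
Qed.

Lemma equilibrium_scale (K : rated_network) (d : nat) (t x y z : R) :
  source_degree d K -> t <> 0 ->
  equilibrium K (t * x) (t * y) (t * z) <-> equilibrium K x y z.
Proof.
move=> deg_K t_neq0; have td_neq0 : t ^ d <> 0 by apply: pow_nonzero.
split=> eq_K j lt_j; have := eq_K j lt_j; rewrite (ma_rhs_scale K d t x y z j deg_K).
  by case/Rmult_integral.
by move=> ->; ring.
Qed.

Lemma equilibrium_of_two_components (K : rated_network) (x y z : R) :
  degree_preserving K -> ma_rhs K x y z 0 = 0 -> ma_rhs K x y z 1 = 0 ->
  equilibrium K x y z.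
Proof.
move=> pres_K eq0 eq1 [|[|[|j]]] // _.
by have := ma_rhs_sum K x y z pres_K; lra.
Qed.

(** For a homogeneous field, the positive equilibria form rays from the
    origin.  If exactly one positive equilibrium has z = 1, there is exactly
    one ray, and it meets each plane x + y + z = c (c > 0) exactly once. *)
Lemma unique_equilibrium_per_class (K : rated_network) (d : nat) :
  source_degree d K ->
  (exists! p : R * R, 0 < p.1 /\ 0 < p.2 /\ equilibrium K p.1 p.2 1) ->
  forall c : R, 0 < c ->
    exists! p : R * R * R,
      0 < p.1.1 /\ 0 < p.1.2 /\ 0 < p.2 /\ p.1.1 + p.1.2 + p.2 = c /\
      equilibrium K p.1.1 p.1.2 p.2.
Proof.
move=> deg_K [[u v] [[/= u_pos [v_pos eq_uv]] uniq_uv]] c c_pos.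
set t := c / (u + v + 1).
have t_pos : 0 < t by apply: Rdiv_lt_0_compat; lra.
exists (t * u, t * v, t * 1); split.
  rewrite /=; split; [nra | split; [nra | split; [lra | split]]].
    by rewrite /t; field; lra.
  by apply/(equilibrium_scale _ _ _ _ _ _ deg_K); first lra.
move=> [[x y] z] /= [x_pos [y_pos [z_pos [sum_c eq_xyz]]]].
have [ux vy] : (u, v) = (/ z * x, / z * y).
  apply: uniq_uv; split; first by apply: Rmult_lt_0_compat; [apply: Rinv_0_lt_compat|].
  split; first by apply: Rmult_lt_0_compat; [apply: Rinv_0_lt_compat|].
  rewrite -(Rinv_l z); last lra.
  by apply/(equilibrium_scale _ _ _ _ _ _ deg_K); first by apply: Rinv_neq_0_compat; lra.
have defx : x = z * u by rewrite ux; field; lra.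
have defy : y = z * v by rewrite vy; field; lra.
have defz : z = t by rewrite /t -sum_c defx defy; field; lra.
by rewrite defx defy defz Rmult_1_r !(Rmult_comm t).
Qed.

Lemma ma_rhs_N_eq_N' (x y z : R) (j : nat) :
  (j < 3)%nat -> ma_rhs N_rated x y z j = ma_rhs N'_rated x y z j.
Proof.
by case: j => [|[|[|j]]] // _; rewrite /ma_rhs /= /mon /= ?S_INR ?INR_0; ring.
Qed.

Lemma N'_rated_source_degree : source_degree 2 N'_rated.
Proof. by repeat constructor. Qed.

Lemma N'_rated_degree_preserving : degree_preserving N'_rated.
Proof. by repeat constructor. Qed.

Lemma equilibrium_N'_dehomogenized (u v : R) :
  equilibrium N'_rated u v 1 <->
  u * (4 * v - 5) = 3 - 2 * v ^ 2 /\ u ^ 2 + 5 * u = 2 * v ^ 2 + 6 * v.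
Proof.
have rhs0 : ma_rhs N'_rated u v 1 0 =
            - 2 * u ^ 2 - 4 * u * v + 2 * v ^ 2 - 5 * u + 12 * v + 3.
  by rewrite /ma_rhs /= /mon /= ?S_INR ?INR_0; ring.
have rhs1 : ma_rhs N'_rated u v 1 1 =
            u ^ 2 - 4 * u * v - 4 * v ^ 2 + 10 * u - 6 * v + 3.
  by rewrite /ma_rhs /= /mon /= ?S_INR ?INR_0; ring.
split=> [eq_uv | [lin quad]].
  by have := eq_uv 0%nat erefl; have := eq_uv 1%nat erefl; rewrite rhs0 rhs1; lra.
by apply: equilibrium_of_two_components N'_rated_degree_preserving _ _;
  rewrite ?rhs0 ?rhs1; lra.
Qed.

Definition q (v : R) : R := 14 * v ^ 4 + 28 * v ^ 3 - 114 * v ^ 2 + 45 * v + 33.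

(** Substituting u = (3 - 2v^2) / (4v - 5) in the second equation. *)
Lemma quartic_elimination (u v : R) :
  4 * v <> 5 -> u * (4 * v - 5) = 3 - 2 * v ^ 2 ->
  (u ^ 2 + 5 * u = 2 * v ^ 2 + 6 * v <-> q v = 0).
Proof.
move=> v_neq lin.
have key : (4 * v - 5) ^ 2 * (u ^ 2 + 5 * u - 2 * v ^ 2 - 6 * v) = - 2 * q v.
  have -> : (4 * v - 5) ^ 2 * (u ^ 2 + 5 * u - 2 * v ^ 2 - 6 * v) =
            (u * (4 * v - 5)) ^ 2 + 5 * (u * (4 * v - 5)) * (4 * v - 5)
            - (2 * v ^ 2 + 6 * v) * (4 * v - 5) ^ 2 by ring.
  by rewrite lin /q; ring.
have sq_neq0 : (4 * v - 5) ^ 2 <> 0 by apply: pow_nonzero; lra.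
split=> [quad | q_v].
  have : u ^ 2 + 5 * u - 2 * v ^ 2 - 6 * v = 0 by lra.
  by move=> quad0; rewrite quad0 Rmult_0_r in key; lra.
rewrite q_v Rmult_0_r in key.
by case/Rmult_integral: key => //; lra.
Qed.

(** A positive solution of the linear equation has v in a small window:
    sqrt(3/2) < v < 5/4, with 1.2247 < sqrt(3/2). *)
Lemma ratio_window (u v : R) :
  0 < u -> 0 < v -> u * (4 * v - 5) = 3 - 2 * v ^ 2 -> 12247 / 10000 <= v < 5 / 4.
Proof.
move=> u_pos v_pos lin.
have v_lt : 4 * v < 5.
  by case: (Rlt_or_le (4 * v) 5) => // v_ge; nra.
by split; nra.
Qed.

Lemma q_neg_near_5_4 (v : R) : 124 / 100 <= v <= 125 / 100 -> q v < 0.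
Proof.
move=> [v_ge v_le]; rewrite /q.
set w := v - 124 / 100; have -> : v = 124 / 100 + w by rewrite /w; ring.
have w_ge : 0 <= w by rewrite /w; lra.
have w_le : w <= 1 / 100 by rewrite /w; lra.
nra.
Qed.

Definition q_slope (a b : R) : R :=
  14 * (a ^ 3 + a ^ 2 * b + a * b ^ 2 + b ^ 3) + 28 * (a ^ 2 + a * b + b ^ 2)
  - 114 * (a + b) + 45.

Lemma q_sub (a b : R) : q b - q a = (b - a) * q_slope a b.
Proof. by rewrite /q /q_slope; ring. Qed.

Lemma q_slope_neg (a b : R) :
  12247 / 10000 <= a <= 124 / 100 -> 12247 / 10000 <= b <= 124 / 100 ->
  q_slope a b < 0.
Proof.
move=> [a_ge a_le] [b_ge b_le]; rewrite /q_slope.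
set s := a - 12247 / 10000; set t := b - 12247 / 10000.
have -> : a = 12247 / 10000 + s by rewrite /s; ring.
have -> : b = 12247 / 10000 + t by rewrite /t; ring.
have s_ge : 0 <= s by rewrite /s; lra.
have s_le : s <= 2 / 100 by rewrite /s; lra.
have t_ge : 0 <= t by rewrite /t; lra.
have t_le : t <= 2 / 100 by rewrite /t; lra.
nra.
Qed.

(** q has at most one root in the window: it is strictly decreasing on
    [1.2247, 1.24] and negative on [1.24, 1.25]. *)
Lemma q_root_unique (v w : R) :
  12247 / 10000 <= v < 5 / 4 -> 12247 / 10000 <= w < 5 / 4 ->
  q v = 0 -> q w = 0 -> v = w.
Proof.
move=> v_win w_win q_v q_w.
have v_lt : v < 124 / 100.
  by case: (Rlt_or_le v (124 / 100)) => // v_ge; have := q_neg_near_5_4 v; lra.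
have w_lt : w < 124 / 100.
  by case: (Rlt_or_le w (124 / 100)) => // w_ge; have := q_neg_near_5_4 w; lra.
case: (Rtotal_order v w) => [v_lt_w | [// | w_lt_v]].
  by have := q_sub v w; have := q_slope_neg v w; nra.
by have := q_sub w v; have := q_slope_neg w v; nra.
Qed.

Lemma q_root_exists : exists v : R, 123 / 100 <= v <= 124 / 100 /\ q v = 0.
Proof.
have cont : continuity (fun v => - q v) by rewrite /q; reg.
have [v [v_range q_v]] : {v : R | 123 / 100 <= v <= 124 / 100 /\ - q v = 0}.
  by apply: IVT cont _ _ _; rewrite /q; lra.
by exists v; split; last lra.
Qed.

Lemma N'_unique_dehomogenized_equilibrium :
  exists! p : R * R, 0 < p.1 /\ 0 < p.2 /\ equilibrium N'_rated p.1 p.2 1.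
Proof.
have [v0 [v0_range q_v0]] := q_root_exists.
set u0 := (3 - 2 * v0 ^ 2) / (4 * v0 - 5).
have lin0 : u0 * (4 * v0 - 5) = 3 - 2 * v0 ^ 2 by rewrite /u0; field; lra.
exists (u0, v0); split.
  rewrite /= equilibrium_N'_dehomogenized (quartic_elimination u0 v0 _ lin0); last lra.
  by split; [apply: Rdiv_neg_neg; nra | split; [lra | split]].
move=> [u v] /= [u_pos [v_pos]]; rewrite equilibrium_N'_dehomogenized.
move=> [lin quad].
have v_win := ratio_window u v u_pos v_pos lin.
move: quad; rewrite (quartic_elimination u v _ lin); last lra.
move=> q_v; have v_eq : v0 = v by apply: q_root_unique => //; lra.
have u_eq : u0 = u by rewrite /u0 v_eq -lin; field; lra.
by rewrite u_eq v_eq.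
Qed.

Theorem mainTheorem7 :
  (forall (x y z : R) (j : nat), (j < 3)%nat ->
     ma_rhs N_rated x y z j = ma_rhs N'_rated x y z j)
  /\ weakly_reversible N'
  /\ deficiency N' = Posz 1
  /\ (forall c : R, 0 < c ->
        exists! p : R * R * R,
          0 < p.1.1 /\ 0 < p.1.2 /\ 0 < p.2 /\ p.1.1 + p.1.2 + p.2 = c /\
          (forall j : nat, (j < 3)%nat -> ma_rhs N'_rated p.1.1 p.1.2 p.2 j = 0)).
Proof.
split; first exact: ma_rhs_N_eq_N'.
split; first exact: reversible_weakly_reversible N'_reversible.
split; first exact: deficiency_N'.
exact: unique_equilibrium_per_class N'_rated_source_degree
         N'_unique_dehomogenized_equilibrium.
Qed.
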